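(* Let $f_1,f_2\in\mathbb{R}[x_1,\ldots,x_n]$ be homogeneous cubic polynomials, each irreducible in $\mathbb{R}[x_1,\ldots,x_n]$. Then $f_1$ and $f_2$ are congruent if and only if the cones $\mathcal{F}(f_1)$ and $\mathcal{F}(f_2)$ are congruent.
   Context: For a polynomial $f$, $\mathcal{F}(f):=f^{-1}(0)\subset\mathbb{R}^n$. Two homogeneous polynomials $f_1,f_2$ on $\mathbb{R}^n$ are called congruent if there exist an orthogonal linear map $U$ of $\mathbb{R}^n$ and a real constant $c\neq 0$ such that $f_1(x)=c\,f_2(Ux)$ for all $x$. Two cones (subsets) $\mathcal{F}_1,\mathcal{F}_2\subset\mathbb{R}^n$ are congruent if $\mathcal{F}_2=U\mathcal{F}_1$ for some orthogonal linear map $U$ of $\mathbb{R}^n$. *)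

From HB Require Import structures.
From mathcomp Require Import all_boot all_order all_algebra.
From mathcomp Require Import reals.
From mathcomp Require Import mpoly.
Set Implicit Arguments. Unset Strict Implicit. Unset Printing Implicit Defensive.
Import Order.TTheory GRing.Theory Num.Theory.
Local Open Scope ring_scope.

Definition irreducible_mpoly (R : realType) (n : nat) (f : {mpoly R[n]}) : Prop :=
  [/\ f != 0, f \isn't a GRing.unit &
      forall g h : {mpoly R[n]}, f = g * h -> g \is a GRing.unit \/ h \is a GRing.unit].

Definition evalv (R : realType) (n : nat) (f : {mpoly R[n]}) (x : 'cV[R]_n) : R :=
  f.@[fun i => x i 0].

Definition orthogonal_mx (R : realType) (n : nat) (U : 'M[R]_n) : Prop :=
  U *m U^T = 1%:M.

Definition zero_cone (R : realType) (n : nat) (f : {mpoly R[n]}) : 'cV[R]_n -> Prop :=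
  fun x => evalv f x = 0.

Definition congruent_poly (R : realType) (n : nat) (f1 f2 : {mpoly R[n]}) : Prop :=
  exists (U : 'M[R]_n) (c : R), [/\ orthogonal_mx U, c != 0 &
    forall x : 'cV[R]_n, evalv f1 x = c * evalv f2 (U *m x)].

Definition congruent_cone (R : realType) (n : nat) (F1 F2 : 'cV[R]_n -> Prop) : Prop :=
  exists U : 'M[R]_n, orthogonal_mx U /\
    forall y : 'cV[R]_n, F2 y <-> exists x, F1 x /\ y = U *m x.

(* Congruent polynomials have congruent zero sets.  Conversely, if an orthogonal U
   maps F(f1) onto F(f2), then g := f2 o U is a cubic form vanishing on F(f1), and
   we show g = c f1.  On a line through a with f1(a) <> 0 along which f1 has three
   zeros, g - (g(a)/f1(a)) f1 is a cubic with four zeros, hence vanishes.  Three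
   sign changes of f1 along a line persist when the direction is perturbed, so
   g = k f1 on an open piece of every line through a + b, hence everywhere.
   Such a line exists by irreducibility.  Since no linear form divides f1, f1
   vanishes on no hyperplane.  Hence f1 has a smooth real zero p (if all real zeros
   were singular, f1 would be a cube along every line and would vanish on the
   hyperplane grad f1(a).y = 0), and f1 is not of one sign relative to the tangent
   hyperplane at p: some v has (grad f1(p).v) f1(v) < 0, and then
   s |-> f1(p + s v) = s (alpha + beta s + gamma s^2) with alpha gamma < 0 has three
   real roots. *)

From Stdlib Require Import Classical.
From HB Require Import structures.
From mathcomp Require Import all_boot all_order all_algebra.
From mathcomp Require Import reals mpoly polyrcf.
From mathcomp Require Import ring lra zify.
Set Implicit Arguments. Unset Strict Implicit. Unset Printing Implicit Defensive.
Import Order.TTheory GRing.Theory Num.Theory.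
Local Open Scope ring_scope.

Lemma mpoly_ring_ind (n : nat) (R : nzRingType) (P : {mpoly R[n]} -> Prop) :
  (forall c, P c%:MP) -> (forall i, P 'X_i) ->
  (forall p q, P p -> P q -> P (p + q)) ->
  (forall p q, P p -> P q -> P (p * q)) -> forall p, P p.
Proof.
move=> PC PX PD PM; apply: mpolyind; first by rewrite -mpolyC0.
move=> c m p _ _ Pp; apply: (PD) => //; rewrite -mul_mpolyC; apply: (PM) => //.
rewrite mpolyXE_id; apply: big_ind => [|q1 q2|i _]; [by rewrite -mpolyC1 | exact: (PM) |].
by elim: (m i) => [|k IHk]; rewrite ?expr0 -?mpolyC1 // exprS; apply: (PM).
Qed.

Lemma mulr_lt0_sign (R : realDomainType) (x y x' y' : R) :
  0 < x' * x -> 0 < y' * y -> x * y < 0 -> x' * y' < 0.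
Proof.
move=> xx' yy' xy; have := mulr_gt0 xx' yy'.
by rewrite [X in 0 < X](_ : _ = (x * y) * (x' * y')) ?nmulr_rgt0 //; ring.
Qed.

Lemma quadratic_roots_opposite (R : rcfType) (al be ga : R) : al * ga < 0 ->
  exists r1 r2 : R, [/\ r1 < 0, 0 < r2 &
    forall s, ga * s ^+ 2 + be * s + al = ga * ((s - r1) * (s - r2))].
Proof.
move=> alga_lt0.
have ga_neq0 : ga != 0 by apply: contraTneq alga_lt0 => ->; rewrite mulr0 ltxx.
have ga2_gt0 : 0 < ga * ga by rewrite -expr2 exprn_even_gt0.
pose sq := Num.sqrt (be ^+ 2 - 4 * al * ga).
have sq2 : sq ^+ 2 = be ^+ 2 - 4 * al * ga by rewrite sqr_sqrtr //; nra.
pose r1 := (- be - sq) / (2 * ga); pose r2 := (- be + sq) / (2 * ga).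
have factor s : ga * s ^+ 2 + be * s + al = ga * ((s - r1) * (s - r2)).
  rewrite [RHS](_ : _ = ga * s ^+ 2 + be * s + (be ^+ 2 - sq ^+ 2) / (4 * ga)).
    by rewrite sq2; field.
  by rewrite /r1 /r2; field.
have r12_lt0 : r1 * r2 < 0.
  have -> : r1 * r2 = (be ^+ 2 - sq ^+ 2) / (4 * (ga * ga)) by rewrite /r1 /r2; field.
  by rewrite sq2 [X in X < 0](_ : _ = (al * ga) / (ga * ga)) ?ltr_pdivrMr ?mul0r //; field.
clearbody r1 r2; have [r1_lt0|r1_ge0] := ltP r1 0.
  by exists r1, r2; split => //; nra.
have r2_lt0 : r2 < 0 by nra.
by exists r2, r1; split => [||s]; [| nra | rewrite factor [(s - r1) * _]mulrC].
Qed.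

Section UnivariatePoly.
Variable R : realType.
Implicit Types (P Q : {poly R}).

Lemma poly_eq0_on_itv P d : 0 < d -> (forall t, 0 < t <= d -> P.[t] = 0) -> P = 0.
Proof.
move=> d_gt0 P0; pose rs := [seq d / i.+1%:R | i <- iota 0 (size P)].
apply: (@roots_geq_poly_eq0 _ _ rs); last by rewrite size_map size_iota.
  apply/allP => _ /mapP [i _ ->]; apply/eqP/P0.
  by rewrite divr_gt0 ?ltr0Sn //= ler_pdivrMr ?ltr0Sn // ler_peMr ?ler1n // ltW.
rewrite map_inj_uniq ?iota_uniq // => i j /eqP.
rewrite eqr_div ?pnatr_eq0 // => /eqP /(mulfI (lt0r_neq0 d_gt0)) /eqP.
by rewrite eqr_nat eqSS eq_sym => /eqP.
Qed.

Lemma poly_fun_inj P Q : (forall t, P.[t] = Q.[t]) -> P = Q.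
Proof.
move=> PQ; apply/eqP; rewrite -subr_eq0; apply/eqP/(poly_eq0_on_itv ltr01) => t _.
by rewrite hornerD hornerN PQ subrr.
Qed.

Lemma size_coefM_top P Q d e : (size P <= d.+1)%N -> (size Q <= e.+1)%N ->
  (size (P * Q)%R <= (d + e).+1)%N /\ (P * Q)`_(d + e) = P`_d * Q`_e.
Proof.
move=> sP sQ; split; first by apply: leq_trans (size_polyMleq _ _) _; lia.
rewrite coefM (bigD1 (Ordinal (leq_addr e d.+1))) //= addKn big1 ?addr0 // => j.
rewrite -val_eqE /= => neq_jd; have [ltjd|ltdj|eq_jd] := ltngtP j d.
- rewrite [Q`__]nth_default ?mulr0 //.
  by apply: leq_trans sQ _; rewrite ltn_subRL ltn_add2r.
- by rewrite [P`__]nth_default ?mul0r //; apply: leq_trans sP _.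
- by rewrite eq_jd eqxx in neq_jd.
Qed.

Lemma size_coefX_top P d k : (size P <= d.+1)%N ->
  (size (P ^+ k)%R <= (d * k).+1)%N /\ (P ^+ k)`_(d * k) = P`_d ^+ k.
Proof.
move=> sP; elim: k => [|k [sPk cPk]]; first by rewrite muln0 size_poly1 coefC.
by rewrite !exprS mulnS; have [-> ->] := size_coefM_top sP sPk; rewrite cPk.
Qed.

Lemma size_coef_prod_top (I : Type) (r : seq I) (F : I -> {poly R}) (D : I -> nat) :
  (forall i, size (F i) <= (D i).+1)%N ->
  (size (\prod_(i <- r) F i)%R <= (\sum_(i <- r) D i).+1)%N /\
  (\prod_(i <- r) F i)`_(\sum_(i <- r) D i) = \prod_(i <- r) (F i)`_(D i).
Proof.
move=> sF; elim: r => [|i r [sFr cFr]]; first by rewrite !big_nil size_poly1 coefC.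
by rewrite !big_cons; have [-> ->] := size_coefM_top (sF i) sFr; rewrite cFr.
Qed.

Lemma horner_size4 P t : (size P <= 4)%N ->
  P.[t] = P`_0 + P`_1 * t + P`_2 * t ^+ 2 + P`_3 * t ^+ 3.
Proof.
move=> sP; rewrite (horner_coef_wide _ sP) !big_ord_recr big_ord0 /=.
by rewrite add0r expr0 mulr1 expr1.
Qed.

Lemma poly_sign_near0 P : P.[0] != 0 ->
  exists2 d : R, 0 < d & forall e, `|e| < d -> 0 < P.[e] * P.[0].
Proof.
move=> P0; have /(poly_cont 0 P) [d d_gt0 Pd] : 0 < `|P.[0]| by rewrite normr_gt0.
exists d => // e; rewrite -[e]subr0 => /Pd; rewrite subr0.
have [P0_gt0|P0_le0] := ltrP 0 P.[0].
  by rewrite (gtr0_norm P0_gt0) ltr_norml => /andP [? ?]; nra.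
have P0_lt0 : P.[0] < 0 by rewrite lt_neqAle P0.
by rewrite (ler0_norm P0_le0) ltr_norml => /andP [? ?]; nra.
Qed.

End UnivariatePoly.

Section PolynomialsOnLines.
Variables (R : realType) (n : nat).
Implicit Types (f p q : {mpoly R[n]}) (a c w x y : 'cV[R]_n).

Definition line_poly f a w : {poly R} :=
  mmap (@polyC R) (fun i => (a i 0)%:P + w i 0 *: 'X) f.

Definition dotv c y : R := \sum_i c i 0 * y i 0.

Definition grad f a : 'cV[R]_n := \col_i evalv f^`M(i) a.

Lemma dotv0l y : dotv 0 y = 0.
Proof. by rewrite /dotv big1 // => i _; rewrite mxE mul0r. Qed.

Lemma dotvDr c x y : dotv c (x + y) = dotv c x + dotv c y.
Proof. by rewrite /dotv -big_split; apply: eq_bigr => i _; rewrite mxE mulrDr. Qed.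

Lemma dotvBr c x y : dotv c (x - y) = dotv c x - dotv c y.
Proof. by rewrite /dotv -sumrB; apply: eq_bigr => i _; rewrite !mxE mulrBr. Qed.

Lemma dotvZr c k y : dotv c (k *: y) = k * dotv c y.
Proof. by rewrite /dotv mulr_sumr; apply: eq_bigr => i _; rewrite mxE mulrCA. Qed.

Lemma dotv_delta c i : dotv c (delta_mx i 0) = c i 0.
Proof.
rewrite /dotv (bigD1 i) //= big1 => [|j ji]; first by rewrite mxE !eqxx mulr1 addr0.
by rewrite mxE (negbTE ji) mulr0.
Qed.

Lemma line_polyD p q a w : line_poly (p + q) a w = line_poly p a w + line_poly q a w.
Proof. exact: rmorphD. Qed.

Lemma line_polyM p q a w : line_poly (p * q) a w = line_poly p a w * line_poly q a w.
Proof. exact: rmorphM. Qed.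

Lemma horner_line_poly f a w t : (line_poly f a w).[t] = evalv f (a + t *: w).
Proof.
elim/mpoly_ring_ind: f => [c|i|p q IHp IHq|p q IHp IHq].
- by rewrite /line_poly mmapC hornerC /evalv mevalC.
- rewrite /line_poly mmapX mmap1U /evalv mevalXU !mxE.
  by rewrite hornerD hornerC hornerZ hornerX mulrC.
- by rewrite line_polyD hornerD IHp IHq /evalv mevalD.
- by rewrite line_polyM hornerM IHp IHq /evalv mevalM.
Qed.

Lemma line_poly_coef0 f a w : (line_poly f a w)`_0 = evalv f a.
Proof. by rewrite -horner_coef0 horner_line_poly scale0r addr0. Qed.

Lemma line_poly_coef1 f a w : (line_poly f a w)`_1 = dotv (grad f a) w.
Proof.
rewrite /dotv; elim/mpoly_ring_ind: f => [c|i|p q IHp IHq|p q IHp IHq].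
- rewrite /line_poly mmapC coefC big1 // => i _.
  by rewrite mxE mderivC /evalv meval0 mul0r.
- rewrite /line_poly mmapX mmap1U coefD coefC coefZ coefX add0r mulr1.
  rewrite (bigD1 i) //= big1 ?addr0 => [|j ji]; rewrite mxE mderivX mnm1E.
    by rewrite eqxx -{1}[U_(i)%MM]add0m addmK mpolyX0 scale1r /evalv meval1 mul1r.
  by rewrite eq_sym (negbTE ji) scale0r /evalv meval0 mul0r.
- rewrite line_polyD coefD IHp IHq -big_split /=.
  by apply: eq_bigr => i _; rewrite !mxE mderivD /evalv mevalD mulrDl.
- rewrite line_polyM coefM big_ord_recr big_ord1 /= !line_poly_coef0 IHp IHq.
  rewrite mulr_sumr mulr_suml -big_split /=.
  by apply: eq_bigr => i _; rewrite !mxE mderivM /evalv mevalD !mevalM; ring.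
Qed.

Lemma line_poly_dhomog d f a w : f \is d.-homog ->
  (size (line_poly f a w) <= d.+1)%N /\ (line_poly f a w)`_d = evalv f w.
Proof.
move=> /dhomogP f_d; set h := fun i => (a i 0)%:P + w i 0 *: 'X.
have top_h i k : (size (h i ^+ k)%R <= k.+1)%N /\ (h i ^+ k)`_k = w i 0 ^+ k.
  have size_h : (size (h i) <= 2)%N.
    rewrite (leq_trans (size_polyD _ _)) // geq_max (leq_trans (size_polyC_leq1 _)) //.
    by rewrite (leq_trans (size_scale_leq _ _)) // size_polyX.
  have := size_coefX_top k size_h; rewrite mul1n coefD coefC coefZ coefX.
  by rewrite add0r mulr1.
have top_mono m : m \in msupp f ->
    (size ((f@_m)%:P * mmap1 h m)%R <= d.+1)%N /\
    ((f@_m)%:P * mmap1 h m)`_d = f@_m * \prod_i w i 0 ^+ m i.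
  move=> mf; have -> : d = (\sum_i m i)%N by rewrite -mdegE f_d.
  have [size_m coef_m] := @size_coef_prod_top _ _ (index_enum 'I_n)
    (fun i => h i ^+ m i) (fun i => m i) (fun i => (top_h i (m i)).1).
  rewrite /mmap1 coefCM coef_m; split; last first.
    by congr (_ * _); apply: eq_bigr => i _; rewrite (top_h i (m i)).2.
  rewrite (leq_trans (size_polyMleq _ _)) // (leq_trans _ size_m) //.
  by rewrite size_polyC; case: (_ != 0); rewrite /= ?leq_pred.
rewrite /evalv mevalE /line_poly /mmap -/h !big_seq; split.
  apply: (big_ind (fun P : {poly R} => size P <= d.+1)%N) => [|P Q sP sQ|m /top_mono[] //].
    by rewrite size_poly0.
  by rewrite (leq_trans (size_polyD _ _)) // geq_max sP sQ.
by rewrite coef_sum; apply: eq_bigr => m /top_mono[].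
Qed.

Lemma evalv_line_cubic f a w t : f \is 3.-homog ->
  evalv f (a + t *: w) =
  evalv f a + dotv (grad f a) w * t + (line_poly f a w)`_2 * t ^+ 2 + evalv f w * t ^+ 3.
Proof.
move=> /(line_poly_dhomog a w) [size_f coef3_f].
by rewrite -horner_line_poly (horner_size4 _ size_f) coef3_f line_poly_coef0 line_poly_coef1.
Qed.

Lemma mcoeff0_evalv p : p@_0 = evalv p 0.
Proof.
elim/mpoly_ring_ind: p => [c|i|p q IHp IHq|p q IHp IHq].
- by rewrite mcoeffC eqxx mulr1 /evalv mevalC.
- rewrite /evalv mevalXU mxE mcoeffX; case: eqP => // /mnmP /(_ i).
  by rewrite mnm1E eqxx mnm0E.
- by rewrite mcoeffD IHp IHq /evalv mevalD.
- by rewrite (mcoeff0_is_multiplicative _ _).1 IHp IHq /evalv mevalM.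
Qed.

Lemma evalv_mderiv_eq0 p : (forall x, evalv p x = 0) ->
  forall i x, evalv p^`M(i) x = 0.
Proof.
move=> p0 i x; have /poly_fun_inj line0 t : (line_poly p x (delta_mx i 0)).[t] = 0.[t].
  by rewrite horner_line_poly p0 horner0.
by have := dotv_delta (grad p x) i; rewrite -line_poly_coef1 line0 coef0 mxE.
Qed.

Lemma mpoly_evalv_eq0 p : (forall x, evalv p x = 0) -> p = 0.
Proof.
move=> p0; apply/mpolyP => m; rewrite mcoeff0.
elim: {m}(mdeg m) {-2}m (erefl (mdeg m)) p p0 => [|k IHk] m deg_m p p0.
  have /eqP-> : m == 0%MM by rewrite -mdeg_eq0 -deg_m.
  by rewrite mcoeff0_evalv p0.
have [i m_i] : exists i, m i != 0%N.
  apply/existsP; apply: contra_eqT deg_m; rewrite negb_exists => /forallP m0.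
  suff -> : m = 0%MM by rewrite mdeg0.
  by apply/mnmP => i; rewrite mnm0E; apply/eqP/negPn.
have m_split : m = (m - U_(i) + U_(i))%MM.
  apply/mnmP => j; rewrite mnmDE mnmBE mnm1E.
  by case: (i =P j) => [<-|_]; rewrite ?subnK ?lt0n // subn0 addn0.
have deg_m' : mdeg (m - U_(i))%MM = k.
  by apply/eqP; rewrite -eqSS -addn1 -(mdeg1 i) -mdegD -m_split deg_m.
have := IHk _ deg_m' _ (evalv_mderiv_eq0 p0 i).
by rewrite mcoeff_mderiv -m_split => /eqP; rewrite mulrn_eq0 => /eqP.
Qed.

Lemma exists_evalv_neq0 p : p != 0 -> exists a, evalv p a != 0.
Proof.
move=> p_neq0; apply: NNPP => no_a; move/eqP: p_neq0; apply; apply: mpoly_evalv_eq0 => x.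
by apply/eqP/negPn/negP => px; apply: no_a; exists x.
Qed.

End PolynomialsOnLines.

Section AlternatingLine.
Variables (R : realType) (n : nat) (f : {mpoly R[n]}).
Implicit Types (a b d : 'cV[R]_n).

Definition alternating_line a b := exists t1 t2 t3 : R, [/\ 0 < t1 < t2, t2 < t3,
  evalv f a * evalv f (a + t1 *: b) < 0,
  evalv f (a + t1 *: b) * evalv f (a + t2 *: b) < 0 &
  evalv f (a + t2 *: b) * evalv f (a + t3 *: b) < 0].

Lemma alternating_line_zeros a b : alternating_line a b ->
  evalv f a != 0 /\ exists s : seq R,
    [/\ uniq (0 :: s), size s = 3 & {in s, forall t, evalv f (a + t *: b) = 0}].
Proof.
move=> [t1 [t2 [t3 [/andP [t1_gt0 t12] t23 s01 s12 s23]]]].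
have zero_in u v : u <= v -> evalv f (a + u *: b) * evalv f (a + v *: b) < 0 ->
    exists2 r, u < r < v & evalv f (a + r *: b) = 0.
  rewrite -!horner_line_poly => /poly_ivtoo h /h [r]; rewrite in_itv /= => ? /eqP.
  by rewrite horner_line_poly; exists r.
have [||r1 /andP [r1_gt0 r1t1] f_r1] := zero_in 0 t1; rewrite ?scale0r ?addr0 ?ltW //.
have [||r2 /andP [t1r2 r2t2] f_r2] := zero_in t1 t2; rewrite ?ltW //.
have [||r3 /andP [t2r3 r3t3] f_r3] := zero_in t2 t3; rewrite ?ltW //.
split; first by apply: contraTneq s01 => ->; rewrite mul0r ltxx.
exists [:: r1; r2; r3]; split => //; last by move=> t; rewrite !inE => /or3P [] /eqP->.
rewrite /= !inE !negb_or !andbT.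
by rewrite !lt_eqF //; lra.
Qed.

Lemma alternating_line_perturb a b d : alternating_line a b ->
  exists2 delta : R, 0 < delta &
    forall e : R, 0 < e < delta -> alternating_line a (b + e *: d).
Proof.
move=> [t1 [t2 [t3 [t12 t23 s01 s12 s23]]]].
have stable t : evalv f (a + t *: b) != 0 -> exists2 delta : R, 0 < delta &
    forall e : R, 0 < e < delta -> 0 < evalv f (a + t *: (b + e *: d)) * evalv f (a + t *: b).
  move=> ft; have [|delta delta_gt0 sgn] :=
    @poly_sign_near0 _ (line_poly f (a + t *: b) (t *: d)).
    by rewrite horner_line_poly scale0r addr0.
  exists delta => // e /andP [e_gt0 e_lt]; have := sgn e; rewrite gtr0_norm // => /(_ e_lt).
  by rewrite !horner_line_poly scale0r addr0 scalerDr !scalerA addrA [e * t]mulrC.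
have neq0 (x y : R) : x * y < 0 -> x != 0 /\ y != 0.
  by move=> xy; split; apply: contraTneq xy => ->; rewrite ?mul0r ?mulr0 ltxx.
have [d1 d1_gt0 sg1] := stable t1 (neq0 _ _ s01).2.
have [d2 d2_gt0 sg2] := stable t2 (neq0 _ _ s12).2.
have [d3 d3_gt0 sg3] := stable t3 (neq0 _ _ s23).2.
exists (Num.min d1 (Num.min d2 d3)) => [|e]; first by rewrite !lt_min d1_gt0 d2_gt0.
rewrite !lt_min => /andP [e_gt0 /and3P [e1 e2 e3]].
have fa2 : 0 < evalv f a * evalv f a by rewrite -expr2 exprn_even_gt0 ?(neq0 _ _ s01).1.
have := sg1 e; have := sg2 e; have := sg3 e.
rewrite e_gt0 e1 e2 e3 => /(_ isT) s3' /(_ isT) s2' /(_ isT) s1'.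
exists t1, t2, t3; split => //.
- exact: mulr_lt0_sign fa2 s1' s01.
- exact: mulr_lt0_sign s1' s2' s12.
- exact: mulr_lt0_sign s2' s3' s23.
Qed.

End AlternatingLine.

Section ExtensionFromZeroSet.
Variables (R : realType) (n : nat) (f : {mpoly R[n]}) (g : 'cV[R]_n -> R).
Hypothesis f_homog : f \is 3.-homog.
Hypothesis g_cubic : forall a w : 'cV[R]_n,
  exists2 P : {poly R}, (size P <= 4)%N & forall t, g (a + t *: w) = P.[t].
Hypothesis g_zero : forall x, evalv f x = 0 -> g x = 0.
Implicit Types (a b x : 'cV[R]_n).

Lemma eq_on_alternating_line a b : alternating_line f a b ->
  forall t, g (a + t *: b) = g a / evalv f a * evalv f (a + t *: b).
Proof.
move=> /alternating_line_zeros [fa_neq0 [s [uniq_s size_s f_s]]].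
have [P size_P g_P] := g_cubic a b; set k := g a / evalv f a.
suff /eqP : P - k *: line_poly f a b = 0.
  by rewrite subr_eq0 => /eqP P_eq t; rewrite g_P P_eq hornerZ horner_line_poly.
apply: (@roots_geq_poly_eq0 _ _ (0 :: s)) => //=; last first.
  rewrite size_s (leq_trans (size_polyD _ _)) // geq_max size_P size_polyN.
  by rewrite (leq_trans (size_scale_leq _ _)) // (line_poly_dhomog _ _ f_homog).1.
rewrite /root !hornerE horner_line_poly -g_P scale0r addr0 /k mulfVK // subrr eqxx /=.
apply/allP => t /f_s f_t.
by rewrite /root !hornerE horner_line_poly -g_P f_t g_zero // mulr0 subrr.
Qed.

Lemma eq_scaled_of_alternating_line a b : alternating_line f a b ->
  forall x, g x = g a / evalv f a * evalv f x.
Proof.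
move=> alt_ab x; set d := x - (a + b).
have [delta delta_gt0 alt_near] := alternating_line_perturb d alt_ab.
have [P size_P g_P] := g_cubic (a + b) d.
suff /eqP : P - (g a / evalv f a) *: line_poly f (a + b) d = 0.
  rewrite subr_eq0 => /eqP P_eq.
  by have := g_P 1; rewrite P_eq hornerZ horner_line_poly scale1r addrC subrK.
apply: (@poly_eq0_on_itv _ _ (delta / 2)) => [|e /andP [e_gt0 e_le]].
  by rewrite divr_gt0.
have e_lt : 0 < e < delta by rewrite e_gt0 /=; lra.
rewrite !hornerE horner_line_poly -g_P.
have -> : a + b + e *: d = a + 1 *: (b + e *: d) by rewrite scale1r addrA.
by rewrite (eq_on_alternating_line (alt_near e e_lt)) subrr.
Qed.

End ExtensionFromZeroSet.

Section AlternatingLineExists.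
Variables (R : realType) (n : nat) (f : {mpoly R[n]}).
Implicit Types (p v : 'cV[R]_n).

Lemma alternating_line_of_roots p v (m M ga : R) : m < 0 -> 0 < M -> ga != 0 ->
  (forall s, evalv f (p + s *: v) = ga * (s * ((s - m) * (s - M)))) ->
  alternating_line f (p + (2 * m) *: v) v.
Proof.
move=> m_lt0 M_gt0 ga_neq0 f_line; pose h s := s * ((s - m) * (s - M)).
have f_a : evalv f (p + (2 * m) *: v) = ga * h (2 * m) by rewrite f_line.
have f_shift s : evalv f (p + (2 * m) *: v + (s - 2 * m) *: v) = ga * h s.
  by rewrite -addrA -scalerDl [2 * m + _]addrC subrK f_line.
have alt x y : h x * h y < 0 -> ga * h x * (ga * h y) < 0.
  by move=> hxy; rewrite mulrACA pmulr_rlt0 // -expr2 exprn_even_gt0.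
have mm : 0 < m * m by nra.
have MM : 0 < M * M by nra.
have h1 : h (2 * m) < 0 by rewrite /h; nra.
have h2 : 0 < h (m / 2) by rewrite /h; nra.
have h3 : h (M / 2) < 0 by rewrite /h; nra.
have h4 : 0 < h (2 * M) by rewrite /h; nra.
exists (m / 2 - 2 * m), (M / 2 - 2 * m), (2 * M - 2 * m).
by rewrite f_a !f_shift; split; try apply: alt; nra.
Qed.

Lemma alternating_line_of_zero p v : f \is 3.-homog -> evalv f p = 0 ->
  dotv (grad f p) v * evalv f v < 0 -> exists a, alternating_line f a v.
Proof.
move=> f_homog fp_eq0 sgn_v.
have fv_neq0 : evalv f v != 0 by apply: contraTneq sgn_v => ->; rewrite mulr0 ltxx.
have [r1 [r2 [r1_lt0 r2_gt0 factor]]] := quadratic_roots_opposite (line_poly f p v)`_2 sgn_v.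
exists (p + (2 * r1) *: v); apply: alternating_line_of_roots r1_lt0 r2_gt0 fv_neq0 _ => s.
by rewrite evalv_line_cubic // fp_eq0 [RHS]mulrCA -factor; ring.
Qed.

Lemma vanish_on_kernel_of_sign (c u : 'cV[R]_n) : dotv c u != 0 ->
  (forall v, 0 <= dotv c v * evalv f v) -> forall y, dotv c y = 0 -> evalv f y = 0.
Proof.
move=> cu_neq0 sgn y cy_eq0; apply/eqP/negPn/negP => fy_neq0.
pose k := - (dotv c u * evalv f y).
have [|delta delta_gt0 near_y] := @poly_sign_near0 _ (line_poly f y (k *: u)).
  by rewrite horner_line_poly scale0r addr0.
pose e := delta / 2; have e_gt0 : 0 < e by rewrite divr_gt0.
have e_lt : e < delta by rewrite /e; lra.
have := near_y e; rewrite gtr0_norm // !horner_line_poly scale0r addr0 => /(_ e_lt).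
set fv := evalv f _ => fv_fy_gt0.
have := sgn (y + e *: (k *: u)); rewrite dotvDr cy_eq0 add0r !dotvZr -/fv /k.
have : 0 < (dotv c u * dotv c u) * (fv * evalv f y).
  by rewrite mulr_gt0 // -expr2 exprn_even_gt0.
by move=> pos; apply/negP; rewrite -ltNge; nra.
Qed.

End AlternatingLineExists.

Section HyperplaneDivisibility.
Variables (R : realType) (n : nat).
Implicit Types (f q : {mpoly R[n]}) (c y : 'cV[R]_n).

Definition lin_form c : {mpoly R[n]} := \sum_i c i 0 *: 'X_i.

Lemma evalv_lin_form c y : evalv (lin_form c) y = dotv c y.
Proof.
rewrite /evalv /lin_form /dotv raddf_sum; apply: eq_bigr => i _.
by rewrite /= mevalZ mevalXU.
Qed.

Lemma lin_form_homog c : lin_form c \is 1.-homog.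
Proof.
apply: rpred_sum => i _; apply: dhomogZ.
by rewrite dhomogX; apply/eqP; apply: mdeg1.
Qed.

Lemma mpoly_unit_const q : q \is a GRing.unit -> q = (q@_0)%:MP /\ q@_0 != 0.
Proof. by case/andP => /eqP q_const; rewrite unitfE. Qed.

Lemma lin_form_dvd_of_vanish f c k : c k 0 != 0 ->
  (forall y, dotv c y = 0 -> evalv f y = 0) -> exists q, f = lin_form c * q.
Proof.
move=> ck_neq0 f_vanish; set L := lin_form c.
(* sigma projects onto the hyperplane dotv c y = 0 along the k-th axis *)
pose sigma := [tuple if i == k then 'X_k - (c k 0)^-1 *: L else 'X_i | i < n].
have sigmaX i : 'X_i \mPo sigma = if i == k then 'X_k - (c k 0)^-1 *: L else 'X_i.
  by rewrite comp_mpolyXU -tnth_nth tnth_mktuple.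
have dvd_sub h : exists q, h - (h \mPo sigma) = L * q.
  elim/mpoly_ring_ind: h => [a|i|p1 p2 [q1 e1] [q2 e2]|p1 p2 [q1 e1] [q2 e2]].
  - by exists 0; rewrite comp_mpolyC subrr mulr0.
  - rewrite sigmaX; case: eqP => [->|_]; last by exists 0; rewrite subrr mulr0.
    by exists (c k 0)^-1%:MP; rewrite mulrC mul_mpolyC opprB addrC subrK.
  - by exists (q1 + q2); rewrite raddfD /= mulrDr -e1 -e2 opprD addrACA.
  - exists (q1 * p2 + (p1 \mPo sigma) * q2).
    by rewrite mulrDr !mulrA -e1 [L * _]mulrC -mulrA -e2 rmorphM /=; ring.
have comp_eq0 : f \mPo sigma = 0.
  apply: mpoly_evalv_eq0 => y; rewrite /evalv comp_mpoly_meval.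
  pose y' := y - ((c k 0)^-1 * dotv c y) *: delta_mx k 0.
  rewrite (meval_eq (v2 := fun i => y' i 0)) => [|i]; first apply: f_vanish.
    by rewrite dotvBr dotvZr dotv_delta mulrAC mulVf // mul1r subrr.
  rewrite tnth_mktuple !mxE; case: eqP => [->|ik]; last by rewrite mevalXU mulr0 subr0.
  by rewrite eqxx mulr1 mevalB mevalZ mevalXU -/(evalv L y) evalv_lin_form.
by have [q fq] := dvd_sub f; exists q; rewrite -fq comp_eq0 subr0.
Qed.

Lemma irreducible_not_vanish_hyperplane d f c : d != 1%N -> f \is d.-homog ->
  irreducible_mpoly f -> c != 0 -> ~ (forall y, dotv c y = 0 -> evalv f y = 0).
Proof.
move=> d_neq1 f_homog [f_neq0 _ f_irr] /matrix0Pn [k [j]]; rewrite ord1 => ck_neq0.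
move=> /(lin_form_dvd_of_vanish ck_neq0) [q f_eq].
have [/mpoly_unit_const [_]|/mpoly_unit_const [q_const _]] := f_irr _ _ f_eq.
  by rewrite mcoeff0_evalv evalv_lin_form -(scale0r 0) dotvZr mul0r eqxx.
have f_homog1 : f \is 1.-homog.
  by rewrite f_eq q_const mulrC mul_mpolyC dhomogZ ?lin_form_homog.
by move/eqP: d_neq1; apply; apply: dhomog_uniq f_neq0 f_homog f_homog1.
Qed.

End HyperplaneDivisibility.

Section SingularZeroSet.
Variables (R : realType) (n : nat) (f : {mpoly R[n]}).
Hypothesis f_homog : f \is 3.-homog.
Hypothesis all_singular : forall p, evalv f p = 0 -> grad f p = 0.
Implicit Types (a q w y : 'cV[R]_n).

Lemma evalv_line_singular q w s : evalv f q = 0 ->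
  evalv f (q + s *: w) = (line_poly f q w)`_2 * s ^+ 2 + evalv f w * s ^+ 3.
Proof.
by move=> fq; rewrite evalv_line_cubic // fq all_singular // dotv0l mul0r !add0r.
Qed.

Lemma singular_line_cube q w : evalv f q = 0 -> evalv f w != 0 ->
  forall s, evalv f (q + s *: w) = evalv f w * s ^+ 3.
Proof.
move=> fq fw_neq0; set be := (line_poly f q w)`_2; set ga := evalv f w.
suff be_eq0 : be = 0 by move=> s; rewrite evalv_line_singular // -/be be_eq0 mul0r add0r.
(* Otherwise the second zero q + s0 w of the line would be smooth: comparing the
   coefficients of t in [shift] gives 2 be s0 + 3 ga s0^2 = 0, i.e. be^2 = 0. *)
apply/eqP/negPn/negP => be_neq0; pose s0 := - be / ga.
have fq' : evalv f (q + s0 *: w) = 0 by rewrite evalv_line_singular // -/be -/ga /s0; field.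
have shift t : be * (s0 + t) ^+ 2 + ga * (s0 + t) ^+ 3 =
    (line_poly f (q + s0 *: w) w)`_2 * t ^+ 2 + ga * t ^+ 3.
  by rewrite -!evalv_line_singular // -addrA -scalerDl.
have gs1 : ga * s0 = - be by rewrite /s0; field.
have gs2 : ga * s0 ^+ 2 = - be * s0 by rewrite expr2 mulrA gs1.
have : be * s0 = 0 by have := shift 1; have := shift (-1); lra.
move/eqP; rewrite /s0 !mulf_eq0 invr_eq0 oppr_eq0.
by rewrite (negbTE be_neq0) (negbTE fw_neq0).
Qed.

(* the coefficients of ga ('X - r)^3, where ga = f(w) *)
Lemma line_poly_singular_cube a w : evalv f w != 0 -> exists r,
  line_poly f a w = Poly [:: - evalv f w * r ^+ 3; 3 * evalv f w * r ^+ 2;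
                            - 3 * evalv f w * r; evalv f w].
Proof.
move=> fw_neq0; have [size_le4 coef3] := line_poly_dhomog a w f_homog.
have size4 : size (line_poly f a w) = 4.
  apply/anti_leq; rewrite size_le4 /= ltnNge; apply: contra fw_neq0 => size_le3.
  by rewrite -coef3 nth_default.
have /odd_poly_root [r /eqP] : ~~ odd (size (line_poly f a w)) by rewrite size4.
rewrite horner_line_poly => fq; exists r; apply: poly_fun_inj => t.
rewrite horner_line_poly horner_Poly /=.
have -> : a + t *: w = a + r *: w + (t - r) *: w.
  by rewrite -addrA -scalerDl [r + _]addrC subrK.
by rewrite singular_line_cube //; ring.
Qed.

Lemma singular_cubic_relations a w : evalv f w != 0 ->
  let be := (line_poly f a w)`_2 in
  3 * dotv (grad f a) w * evalv f w = be ^+ 2 /\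
  27 * evalv f a * evalv f w ^+ 2 = be ^+ 3.
Proof.
move=> /(line_poly_singular_cube a) [r line_eq] /=.
rewrite -(line_poly_coef0 f a w) -line_poly_coef1 line_eq !coef_Poly /=.
by split; ring.
Qed.

Lemma singular_zero_set_in_hyperplane a : evalv f a != 0 ->
  grad f a != 0 /\ forall y, dotv (grad f a) y = 0 -> evalv f y = 0.
Proof.
move=> fa_neq0; have no_kernel_nonzero w : evalv f w != 0 -> dotv (grad f a) w != 0.
  move=> fw_neq0; apply/eqP => dw_eq0; have [] := singular_cubic_relations a fw_neq0.
  rewrite dw_eq0 mulr0 mul0r => /esym/eqP; rewrite expf_eq0 /= => /eqP->.
  by rewrite expr0n /=; apply/eqP; rewrite !mulf_neq0 ?expf_neq0 // pnatr_eq0.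
split.
  by move: (no_kernel_nonzero a fa_neq0); apply: contra_neq => ->; rewrite dotv0l.
by move=> y dy_eq0; apply/eqP/negPn/negP => /no_kernel_nonzero; rewrite dy_eq0 eqxx.
Qed.

End SingularZeroSet.

Section IrreducibleCubic.
Variables (R : realType) (n : nat) (f : {mpoly R[n]}).
Hypothesis f_homog : f \is 3.-homog.
Hypothesis f_irr : irreducible_mpoly f.

Lemma exists_smooth_zero : exists p, evalv f p = 0 /\ grad f p != 0.
Proof.
apply: NNPP => no_smooth.
have all_singular p : evalv f p = 0 -> grad f p = 0.
  by move=> fp_eq0; apply/eqP/negPn/negP => grad_neq0; apply: no_smooth; exists p.
have [f_neq0 _ _] := f_irr; have [a fa_neq0] := exists_evalv_neq0 f_neq0.
have [grad_neq0 vanish] := singular_zero_set_in_hyperplane f_homog all_singular fa_neq0.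
exact: irreducible_not_vanish_hyperplane f_homog f_irr grad_neq0 vanish.
Qed.

Lemma exists_alternating_line : exists a b, alternating_line f a b.
Proof.
have [p [fp_eq0 grad_neq0]] := exists_smooth_zero.
have [v sgn_v] : exists v, dotv (grad f p) v * evalv f v < 0.
  apply: NNPP => no_v.
  apply: (irreducible_not_vanish_hyperplane _ f_homog f_irr grad_neq0) => //.
  have /matrix0Pn [k [j]] := grad_neq0; rewrite ord1 -dotv_delta => dk_neq0.
  apply: vanish_on_kernel_of_sign dk_neq0 _ => v; rewrite leNgt.
  by apply/negP => sgn_v; apply: no_v; exists v.
have [a alt] := alternating_line_of_zero f_homog fp_eq0 sgn_v.
by exists a, v.
Qed.

Lemma eq_scaled_of_vanish_zero_set (g : 'cV[R]_n -> R) :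
  (forall a w, exists2 P : {poly R}, (size P <= 4)%N & forall t, g (a + t *: w) = P.[t]) ->
  (forall x, evalv f x = 0 -> g x = 0) ->
  exists c, forall x, g x = c * evalv f x.
Proof.
move=> g_cubic g_zero; have [a [b alt]] := exists_alternating_line.
by exists (g a / evalv f a); apply: eq_scaled_of_alternating_line alt.
Qed.

End IrreducibleCubic.

Section Congruence.
Variables (R : realType) (n : nat).
Implicit Types (U : 'M[R]_n) (x y : 'cV[R]_n).

Lemma orthogonal_mxK U x : orthogonal_mx U -> U *m (U^T *m x) = x.
Proof. by move=> U_orth; rewrite mulmxA U_orth mul1mx. Qed.

Lemma orthogonal_mxTK U x : orthogonal_mx U -> U^T *m (U *m x) = x.
Proof. by move=> /mulmx1C U_orth; rewrite mulmxA U_orth mul1mx. Qed.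

Lemma congruent_cone_of_poly (f1 f2 : {mpoly R[n]}) :
  congruent_poly f1 f2 -> congruent_cone (zero_cone f1) (zero_cone f2).
Proof.
move=> [U [c [U_orth c_neq0 f1_eq]]]; exists U; split=> // y; split.
  move=> f2y_eq0; exists (U^T *m y); rewrite orthogonal_mxK //.
  by rewrite /zero_cone f1_eq orthogonal_mxK // f2y_eq0 mulr0.
move=> [x [f1x_eq0 ->]]; move: f1x_eq0; rewrite /zero_cone f1_eq => /eqP.
by rewrite mulf_eq0 (negbTE c_neq0) => /eqP.
Qed.

Lemma congruent_poly_of_cone (f1 f2 : {mpoly R[n]}) :
  f1 \is 3.-homog -> f2 \is 3.-homog -> irreducible_mpoly f1 ->
  congruent_cone (zero_cone f1) (zero_cone f2) -> congruent_poly f1 f2.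
Proof.
move=> f1_homog f2_homog f1_irr [U [U_orth F2_eq]].
have [||c f2U_eq] :=
  @eq_scaled_of_vanish_zero_set _ _ _ f1_homog f1_irr (fun x => evalv f2 (U *m x)).
- move=> a w; exists (line_poly f2 (U *m a) (U *m w)).
    exact: (line_poly_dhomog _ _ f2_homog).1.
  by move=> t; rewrite horner_line_poly mulmxDr scalemxAr.
- by move=> x f1x_eq0; apply/F2_eq; exists x.
have [f1_neq0 _ _] := f1_irr; have [a f1a_neq0] := exists_evalv_neq0 f1_neq0.
have c_neq0 : c != 0.
  apply: contra_neq f1a_neq0 => c_eq0.
  have /F2_eq [x [f1x_eq0 Ux_eq]] : zero_cone f2 (U *m a).
    by rewrite /zero_cone f2U_eq c_eq0 mul0r.
  by rewrite -[a](orthogonal_mxTK _ U_orth) Ux_eq orthogonal_mxTK.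
exists U, c^-1; split => // [|x]; first by rewrite invr_eq0.
by rewrite f2U_eq mulKf.
Qed.

End Congruence.

Theorem proposition1 (R : realType) (n : nat) (f1 f2 : {mpoly R[n]}) :
  f1 \is 3.-homog -> f2 \is 3.-homog ->
  irreducible_mpoly f1 -> irreducible_mpoly f2 ->
  (congruent_poly f1 f2 <-> congruent_cone (zero_cone f1) (zero_cone f2)).
Proof.
move=> f1_homog f2_homog f1_irr _; split; first exact: congruent_cone_of_poly.
exact: congruent_poly_of_cone.
Qed.
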